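(* Let $r\geq1$ be odd, $m\geq 3$, $n=(r+1)m$, let $u$ be an integer with $\gcd(u,2^m-1)=1$, let $\alpha$ be a primitive element of $\mathbb{F}_{2^{rm}}$, let $0\leq s\leq 2^{rm}-2$, let $\Delta_s=\{\alpha^i\mid s\leq i\leq s+2^{rm-1}-1\}$, and let $f\colon\mathbb{F}_{2^{rm}}\times\mathbb{F}_{2^m}\to\mathbb{F}_2$ be the Boolean function with $\mathrm{supp}(f)=\{(\gamma y^u,y)\mid y\in\mathbb{F}_{2^m}^*,\ \gamma\in\Delta_s\}$. Then $f$ is bent if and only if $r=1$ and $u\equiv 2^t\pmod{2^m-1}$ for some non-negative integer $t$.
   Context: $\mathbb{F}_{2^{rm}}\times\mathbb{F}_{2^m}$ is viewed as an $n$-dimensional $\mathbb{F}_2$-vector space ($\mathbb{F}_{2^m}\subseteq\mathbb{F}_{2^{rm}}$). An $n$-variable Boolean function $f$ ($n$ even) is bent if $|W_f(a,b)|=2^{n/2}$ for all $(a,b)\in\mathbb{F}_{2^{rm}}\times\mathbb{F}_{2^m}$, where $W_f(a,b)=\sum_{(x,y)}(-1)^{f(x,y)+\mathrm{tr}^{rm}_1(ax)+\mathrm{tr}^m_1(by)}$ and $\mathrm{tr}^k_1$ is the absolute trace of $\mathbb{F}_{2^k}$. *)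

From HB Require Import structures.
From mathcomp Require Import all_boot all_order all_algebra all_field.
Set Implicit Arguments. Unset Strict Implicit. Unset Printing Implicit Defensive.
Import Order.TTheory GRing.Theory Num.Theory.
Local Open Scope ring_scope.

(* L plays the role of F_{2^k} (k = r*m); F_{2^m} is the subfield
   {y in L | y^(2^m) = y}. *)

(* absolute trace tr^k_1 : F_{2^k} -> F_2 (values in the prime subfield of L) *)
Definition tr (L : finFieldType) (k : nat) (z : L) : L :=
  \sum_(i < k) z ^+ (2 ^ i).

Definition inSub (L : finFieldType) (m : nat) (y : L) : bool := y ^+ (2 ^ m) == y.

Definition sgnF2 (L : finFieldType) (e : L) : int := if e == 0 then 1 else -1.

Definition walsh (L : finFieldType) (k m : nat) (f : L -> L -> bool) (a b : L) : int :=
  \sum_(x : L) \sum_(y : L | inSub m y)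
     (-1) ^+ f x y * sgnF2 (tr k (a * x)) * sgnF2 (tr m (b * y)).

Definition bent (L : finFieldType) (k m : nat) (f : L -> L -> bool) : Prop :=
  forall a b : L, inSub m b -> `|walsh k m f a b| = 2 ^+ ((k + m)./2).

Definition Delta (L : finFieldType) (alpha : L) (s k : nat) : {set L} :=
  [set alpha ^+ (s + val i) | i : 'I_(2 ^ k.-1)].

Definition fsupp (L : finFieldType) (m : nat) (u : int) (D : {set L}) (x y : L) : bool :=
  [&& y != 0, inSub m y & [exists g in D, x == g * y ^ u]].

(* Write k = r m, N = 2^m - 1 and chi for the additive character (-1)^tr. For
   y <> 0 the fibre {x | f(x,y) = 1} = Delta_s y^u is half of F_{2^k}, so
   W_f(0,0) = 2^k and bentness forces k = (k + m)/2, i.e. r = 1.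

   Let r = 1. If u = 2^t mod N, then y |-> y^u is a Frobenius power on F*, so
   chi(b y) chi(a g y^u) = chi((b^(2^t) + a g) y^(2^t)); by orthogonality of chi,
   W_f(a,b) = +-2^m because b^(2^t) + a g vanishes for at most one g in Delta_s
   when a <> 0.

   Conversely, W_f(a,1) = 2^m - 2 sum_{g in Delta_s} E(a g) with
   E(c) = sum_y chi(y) chi(c y^u), so bentness makes each of these sums 0 mod 2^m.
   As alpha Delta_s and Delta_s differ only at their ends, E(c alpha^(2^(m-1))) = E(c)
   mod 2^m, and since alpha^(2^(m-1)) generates F*, all E(c), c <> 0, are congruent.
   They sum to 2^m and are at most 2^m, so some E(c) = 2^m: tr y = tr (c y^u) for
   all y. With v = u mod N, multiply by y^(N-v) and sum over y <> 0: the power sums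
   sum_y y^j vanish unless N | j, so the left side is 0 while the right side is -c,
   unless v = 2^i mod N for some i. *)

From HB Require Import structures.
From mathcomp Require Import all_boot all_order all_algebra all_field.
From mathcomp Require Import zify ring.
Set Implicit Arguments. Unset Strict Implicit. Unset Printing Implicit Defensive.
Import Order.TTheory GRing.Theory Num.Theory.
Local Open Scope ring_scope.

Lemma sumr_neq (V : zmodType) (T : finType) (t0 : T) (G : T -> V) :
  \sum_(t | t != t0) G t = \sum_t G t - G t0.
Proof. by rewrite [\sum_t G t](bigD1 t0) //= addrC addrK. Qed.

Lemma tr0 (L : finFieldType) k : tr k (0 : L) = 0.
Proof. by rewrite /tr big1 // => i _; rewrite expr0n expn_eq0. Qed.

Section TraceChar2.
Variables (F : finFieldType) (m : nat).
Hypothesis cardF : #|F| = (2 ^ m)%N.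

Lemma card_pchar2 : 2%N \in [pchar F].
Proof. exact: card_finPcharP cardF _. Qed.

Lemma exponent_gt0 : (0 < m)%N.
Proof. by have := card_finNzRing_gt1 F; rewrite cardF; case: (m). Qed.

Lemma exprD_pow2 t (x y : F) : (x + y) ^+ (2 ^ t) = x ^+ (2 ^ t) + y ^+ (2 ^ t).
Proof.
apply: exprDn_pchar; rewrite pnatX (eq_pnat _ (pcharf_eq card_pchar2)).
by rewrite pnat_id.
Qed.

Lemma expr_pow2_inj t : injective (fun x : F => x ^+ (2 ^ t)).
Proof.
move=> x y /= Exy; apply/eqP; rewrite -subr_eq0.
have : (x - y) ^+ (2 ^ t) == 0.
  by rewrite (oppr_pchar2 card_pchar2) exprD_pow2 Exy (addrr_pchar2 card_pchar2).
by rewrite expf_eq0 => /andP[].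
Qed.

Lemma expr_card (x : F) : x ^+ (2 ^ m) = x.
Proof. by rewrite -cardF expf_card. Qed.

Lemma expr_card_pred (x : F) : x != 0 -> x ^+ (2 ^ m).-1 = 1.
Proof.
move=> x0; apply: (mulIf x0).
by rewrite mul1r -exprSr prednK ?expn_gt0 ?expr_card.
Qed.

Lemma tr_sqr_arg (z : F) : tr m (z ^+ 2) = tr m z.
Proof.
rewrite /tr (eq_bigr (fun i : 'I_m => z ^+ (2 ^ i.+1))); last first.
  by move=> i _; rewrite -exprM -expnS.
rewrite -(prednK exponent_gt0) big_ord_recr big_ord_recl /= prednK ?exponent_gt0 //.
rewrite expr_card expn0 expr1 addrC.
by congr (_ + _); apply: eq_bigr => i _; rewrite /bump add1n.
Qed.

Lemma tr_sqr (z : F) : tr m z ^+ 2 = tr m z.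
Proof.
rewrite -[RHS]tr_sqr_arg /tr -!(pFrobenius_autE card_pchar2) rmorph_sum.
by apply: eq_bigr => i _ /=; rewrite !pFrobenius_autE -!exprM mulnC.
Qed.

Lemma tr_F2 (z : F) : tr m z = 0 \/ tr m z = 1.
Proof.
have : tr m z * (tr m z - 1) == 0 by rewrite mulrBr mulr1 -expr2 tr_sqr subrr.
by rewrite mulf_eq0 subr_eq0 => /orP[] /eqP; [left | right].
Qed.

Lemma trD (x y : F) : tr m (x + y) = tr m x + tr m y.
Proof. by rewrite /tr -big_split; apply: eq_bigr => i _; rewrite exprD_pow2. Qed.

Lemma tr_expr_pow2 t (z : F) : tr m (z ^+ (2 ^ t)) = tr m z.
Proof. by elim: t => [|t IH]; rewrite ?expr1 // expnSr exprM tr_sqr_arg. Qed.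

Lemma exists_tr_neq0 : exists z : F, tr m z != 0.
Proof.
apply/existsP; apply: contraT; rewrite negb_exists => /forallP tr_eq0.
pose P : {poly F} := \sum_(i < m) 'X^(2 ^ i).
have m1_lt_m : (m.-1 < m)%N by rewrite ltn_predL exponent_gt0.
have lead_P : P`_(2 ^ m.-1) = 1.
  rewrite /P coef_sum (bigD1 (Ordinal m1_lt_m)) //= coefXn eqxx big1 ?addr0 //.
  move=> i /eqP i_neq; rewrite coefXn eqn_exp2l //; case: eqP => // E.
  by case: i_neq; apply: val_inj.
have P_neq0 : P != 0 by apply: contra_eq_neq lead_P => ->; rewrite coef0 eq_sym oner_neq0.
have size_P : (size P <= (2 ^ m.-1).+1)%N.
  apply: (leq_trans (size_sum _ _ _)); apply/bigmax_leqP => i _.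
  by rewrite size_polyXn ltnS leq_exp2l // -ltnS prednK ?exponent_gt0.
have roots_P : all (root P) (enum F).
  apply/allP => x _; have /negPn/eqP tr_x := tr_eq0 x.
  rewrite /root /P horner_sum -[X in _ == X]tr_x; apply/eqP/eq_bigr => i _.
  by rewrite hornerXn.
have := max_poly_roots P_neq0 roots_P (enum_uniq F).
rewrite -cardE cardF => /leq_trans/(_ size_P); rewrite ltnS leqNgt.
by rewrite ltn_exp2l ?ltn_predL ?exponent_gt0.
Qed.

Definition chi (z : F) : int := sgnF2 (tr m z).

Lemma chiD x y : chi (x + y) = chi x * chi y.
Proof.
rewrite /chi /sgnF2 trD.
by case: (tr_F2 x) => ->; case: (tr_F2 y) => ->;
  rewrite ?addr0 ?add0r ?(addrr_pchar2 card_pchar2) ?eqxx ?oner_eq0.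
Qed.

Lemma chi0 : chi 0 = 1.
Proof. by rewrite /chi tr0 /sgnF2 eqxx. Qed.

Lemma chi_mul_self x : chi x * chi x = 1.
Proof. by rewrite /chi /sgnF2; case: ifP. Qed.

Lemma chi_mul_le1 x y : chi x * chi y <= 1.
Proof. by rewrite /chi /sgnF2; case: ifP; case: ifP. Qed.

Lemma chi_inj_tr x y : chi x = chi y -> tr m x = tr m y.
Proof.
by rewrite /chi /sgnF2; case: (tr_F2 x) => ->; case: (tr_F2 y) => ->;
  rewrite ?eqxx ?oner_eq0.
Qed.

Lemma sum_chiM (c : F) : \sum_z chi (c * z) = if c == 0 then (2 ^ m)%:R else 0.
Proof.
have [->|c0] := eqVneq c 0.
  by under eq_bigr do rewrite mul0r chi0; rewrite sumr_const cardF natz.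
have [z0 tr_z0] := exists_tr_neq0.
have chi_z0 : chi z0 = -1 by rewrite /chi /sgnF2 (negbTE tr_z0).
(* translating z by z0 / c multiplies the sum by chi z0 = -1 *)
have : \sum_z chi (c * z) = - \sum_z chi (c * z).
  rewrite {1}(reindex_inj (addIr (z0 / c))) -sumrN; apply: eq_bigr => z _.
  by rewrite mulrDr mulrCA divff // mulr1 chiD chi_z0 mulrN1.
by move/eqP; rewrite -subr_eq0 opprK -mulr2n mulrn_eq0 => /eqP.
Qed.

Lemma exprz_congr_order (y : F) (w w' : int) : y != 0 ->
  (w = w' %[mod ((2 ^ m).-1)%:Z])%Z -> y ^ w = y ^ w'.
Proof.
move=> y0 /eqP; rewrite eqz_mod_dvd => /dvdzP[q Ew].
rewrite -(subrK w' w) Ew expfzDr // (mulrC q) -exprz_exp -exprnP expr_card_pred //.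
by rewrite exp1rz mul1r.
Qed.

Lemma sum_chiM_expr_pow2 t (d : F) :
  \sum_(y | y != 0) chi (d * y ^+ (2 ^ t)) = (if d == 0 then (2 ^ m)%:R else 0) - 1.
Proof.
rewrite sumr_neq expr0n expn_eq0 mulr0 chi0.
by rewrite -(reindex_inj (F := fun w => chi (d * w)) (P := predT) (@expr_pow2_inj t)) sum_chiM.
Qed.

End TraceChar2.

Section HalfOrbit.
Variables (F : finFieldType) (k : nat) (alpha : F) (s : nat).
Hypothesis k_gt1 : (1 < k)%N.
Hypothesis alpha_prim : ((2 ^ k).-1).-primitive_root alpha.

Lemma half_lt_order : (2 ^ k.-1 < (2 ^ k).-1)%N.
Proof.
rewrite -{2}(prednK (ltnW k_gt1)) expnS mul2n -addnn.
have : (1 < 2 ^ k.-1)%N by rewrite -{1}(expn0 2) ltn_exp2l // -ltnS prednK // ltnW.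
lia.
Qed.

Lemma prim_root_neq0 : alpha != 0.
Proof.
apply: contra_eq_neq (prim_expr_order alpha_prim) => ->.
have order_gt0 : (0 < (2 ^ k).-1)%N := leq_ltn_trans (leq0n _) half_lt_order.
by rewrite expr0n eqn0Ngt order_gt0 eq_sym oner_neq0.
Qed.

Lemma Delta_expr_inj : injective (fun i : 'I_(2 ^ k.-1) => alpha ^+ (s + i)).
Proof.
move=> i j /eqP; rewrite /= (eq_prim_root_expr alpha_prim) eqn_modDl.
by rewrite !modn_small ?(ltn_trans _ half_lt_order) // => /eqP/val_inj.
Qed.

Lemma card_Delta : #|Delta alpha s k| = (2 ^ k.-1)%N.
Proof. by rewrite card_imset ?card_ord //; apply: Delta_expr_inj. Qed.

Lemma big_Delta (G : F -> int) :
  \sum_(g in Delta alpha s k) G g = \sum_(i < 2 ^ k.-1) G (alpha ^+ (s + i)).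
Proof. by rewrite big_imset //= => i j _ _; apply: Delta_expr_inj. Qed.

End HalfOrbit.

Section SupportFibres.
Variables (L : finFieldType) (m : nat) (u : int) (D : {set L}).

Lemma fsupp0 x : fsupp m u D x 0 = false.
Proof. by rewrite /fsupp eqxx. Qed.

Lemma sum_fsupp_fibre (y : L) (G : L -> int) : y != 0 -> inSub m y ->
  \sum_x (fsupp m u D x y : int) * G x = \sum_(g in D) G (g * y ^ u).
Proof.
move=> y0 Sy; have yu0 : y ^ u != 0 by rewrite expfz_eq0 negb_and y0 orbT.
rewrite -(big_imset _ (in2W (mulIf yu0))) /= [RHS]big_mkcond.
apply: eq_bigr => x _; rewrite /fsupp y0 Sy /=.
have -> : (x \in [set g * y ^ u | g in D]) = [exists g in D, x == g * y ^ u].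
  apply/imsetP/existsP => [[g gD ->]|[g /andP[gD /eqP ->]]]; last by exists g.
  by exists g; rewrite gD eqxx.
by case: ifP; rewrite ?mul1r ?mul0r.
Qed.

Lemma sum_signed_fibre (y : L) (G : L -> int) : y != 0 -> inSub m y ->
  \sum_x (-1) ^+ fsupp m u D x y * G x
    = \sum_x G x - 2 * \sum_(g in D) G (g * y ^ u).
Proof.
move=> y0 Sy; rewrite -sum_fsupp_fibre // mulr_sumr -sumrB.
by apply: eq_bigr => x _; case: (fsupp _ _ _ _ _) => /=; ring.
Qed.

End SupportFibres.

(* Each fibre over y <> 0 is Delta * y ^ u, half of the field, so only the fibre
   over y = 0 contributes. *)
Lemma walsh00_Delta (L : finFieldType) k m u (alpha : L) s :
  #|L| = (2 ^ k)%N -> (1 < k)%N -> ((2 ^ k).-1).-primitive_root alpha ->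
  walsh k m (fsupp m u (Delta alpha s k)) 0 0 = (2 ^ k)%:R.
Proof.
move=> cardL k_gt1 alpha_prim.
rewrite /walsh exchange_big (bigD1 0) /=; last by rewrite /inSub expr0n expn_eq0.
rewrite [X in _ + X]big1 => [|y /andP[Sy y0]].
  under eq_bigr do rewrite fsupp0 !mul0r !tr0 /sgnF2 eqxx !mulr1.
  by rewrite addr0 sumr_const cardL natz.
under eq_bigr do rewrite !mul0r !tr0 /sgnF2 eqxx !mulr1 -[_ ^+ _]mulr1.
rewrite sum_signed_fibre // !sumr_const card_Delta // cardL.
by rewrite -mulr_natr mul1r -natrM -expnS prednK ?subrr // ltnW.
Qed.

Lemma bent_Delta_dim (L : finFieldType) k m u (alpha : L) s :
  #|L| = (2 ^ k)%N -> (1 < k)%N -> ((2 ^ k).-1).-primitive_root alpha ->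
  (m <= k)%N -> bent k m (fsupp m u (Delta alpha s k)) -> k = m.
Proof.
move=> cardL k_gt1 alpha_prim m_le_k /(_ 0 0).
rewrite walsh00_Delta // normr_nat -natrX /inSub expr0n expn_eq0 eqxx => /(_ isT).
move/eqP; rewrite eqr_nat eqn_exp2l // => /eqP k_half.
have := odd_double_half (k + m); rewrite -k_half -addnn.
by case: (odd _) => /=; lia.
Qed.

Section DegreeOne.
Variables (F : finFieldType) (m : nat) (u : int) (alpha : F) (s : nat).
Hypothesis cardF : #|F| = (2 ^ m)%N.
Hypothesis m_gt1 : (1 < m)%N.
Hypothesis alpha_prim : ((2 ^ m).-1).-primitive_root alpha.

Local Notation f := (fsupp m u (Delta alpha s m)).
Local Notation gam i := (alpha ^+ (s + i)).
Local Notation half := (2 ^ m.-1)%N.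

Lemma inSub_card (y : F) : inSub m y.
Proof. by rewrite /inSub expr_card. Qed.

Lemma double_half : (2 * half)%N = (2 ^ m)%N.
Proof. by rewrite -expnS prednK // ltnW. Qed.

Lemma walshE a b :
  walsh m m f a b =
  (if (a == 0) && (b == 0) then (2 ^ m * 2 ^ m)%:R else 0)
  - 2 * \sum_(y | y != 0) chi m (b * y) * \sum_(i < half) chi m (a * (gam i * y ^ u)).
Proof.
rewrite /walsh exchange_big /= (eq_bigl predT) => [|y]; last exact: inSub_card.
transitivity (\sum_y chi m (b * y) * \sum_x (-1) ^+ f x y * chi m (a * x)).
  by apply: eq_bigr => y _; rewrite mulr_sumr; apply: eq_bigr => x _; rewrite mulrC mulrA.
rewrite (bigD1 0) //=; under eq_bigr do rewrite fsupp0 expr0 mul1r.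
under [X in _ + X]eq_bigr => y y0.
  rewrite sum_signed_fibre ?inSub_card // big_Delta // mulrBr mulrCA.
over.
rewrite sumrB -mulr_suml addrA -mulrDl -(bigD1 0 (P := predT)) // !sum_chiM //.
by rewrite -mulr_sumr; case: eqP; case: eqP; rewrite ?mul0r ?mulr0 // natrM.
Qed.

Section FrobeniusExponent.
Variable t : nat.
Hypothesis u_frob : (u = (2 ^ t)%:Z %[mod ((2 ^ m).-1)%:Z])%Z.

Local Notation zeros a b := [set i : 'I_half | b ^+ (2 ^ t) + a * gam i == 0].

Lemma walsh_frobenius_zeros a b :
  walsh m m f a b = (if (a == 0) && (b == 0) then (2 ^ m * 2 ^ m)%:R else 0)
                    - 2 * ((2 ^ m * #|zeros a b|)%:R - half%:R).
Proof.
rewrite walshE; congr (_ - 2 * _).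
under eq_bigr do rewrite mulr_sumr; rewrite exchange_big /=.
(* chi m is invariant under Frobenius and y ^ u = y ^+ 2 ^ t on nonzero y *)
under eq_bigr => i _.
  under eq_bigr => y y0.
    rewrite (exprz_congr_order cardF y0 u_frob) /chi -(tr_expr_pow2 cardF t (b * y)).
    rewrite -/(chi m _) -/(chi m _) -(chiD cardF) exprMn mulrA -mulrDl.
  over.
  rewrite sum_chiM_expr_pow2 //.
over.
rewrite sumrB sumr_const card_ord -big_mkcond /= sumr_const -cardsE.
by rewrite natrM mulr_natr.
Qed.

Lemma zeros_le1 a b : a != 0 -> (#|zeros a b| <= 1)%N.
Proof.
move=> a0; apply/card_le1_eqP => i j; rewrite !inE => /eqP di /eqP dj.
apply: (Delta_expr_inj (s := s) m_gt1 alpha_prim); apply: (mulfI a0).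
by apply: (addrI (b ^+ (2 ^ t))); rewrite di dj.
Qed.

Lemma walsh_frobenius_exponent a b : `|walsh m m f a b| = (2 ^ m)%:R.
Proof.
rewrite walsh_frobenius_zeros -double_half !natrM.
have [->|a0] := eqVneq a 0; last first.
  by move: (zeros_le1 b a0); case: #|_| => [|[]] //= _; lia.
have [->|b0] := eqVneq b 0.
  have -> : zeros 0 0 = setT.
    by apply/setP => i; rewrite !inE mul0r addr0 expf_eq0 expn_gt0 eqxx.
  by rewrite cardsT card_ord /=; lia.
have -> : zeros 0 b = set0.
  by apply/setP => i; rewrite !inE mul0r addr0 expf_eq0 (negbTE b0) andbF.
by rewrite cards0 andbF /=; lia.
Qed.

End FrobeniusExponent.

(* The correlation of tr y and tr (c * y ^ u). Its y = 0 term is 1 (reading 0 ^ u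
   as 0); it is written out because 0 ^ 0 = 1 in Rocq. *)
Definition corr (c : F) : int := 1 + \sum_(y | y != 0) chi m y * chi m (c * y ^ u).

Lemma walsh_corr a : a != 0 ->
  walsh m m f a 1 = (2 ^ m)%:R - 2 * \sum_(i < half) corr (a * gam i).
Proof.
move=> a0; rewrite walshE (negbTE a0) /= sub0r /corr big_split /= sumr_const card_ord.
under eq_bigr do rewrite mul1r mulr_sumr; rewrite exchange_big /=.
under [in RHS]eq_bigr do under eq_bigr do rewrite -mulrA.
by rewrite -double_half natrM; ring.
Qed.

Lemma corr0 : corr 0 = 0.
Proof.
rewrite /corr; under eq_bigr do rewrite mul0r chi0 mulr1 -[y in chi m y]mul1r.
by rewrite sumr_neq sum_chiM // oner_eq0 mulr0 chi0 sub0r addrN.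
Qed.

Lemma sum_corr : \sum_(c | c != 0) corr c = (2 ^ m)%:R.
Proof.
rewrite sumr_neq corr0 subr0 /corr big_split /= sumr_const cardF exchange_big /=.
rewrite big1 ?addr0 => [|y y0]; first by rewrite -mulr_natr mul1r.
rewrite -mulr_sumr; under eq_bigr do rewrite mulrC.
by rewrite sum_chiM // expfz_eq0 (negbTE y0) andbF mulr0.
Qed.

Lemma corr_le c : corr c <= (2 ^ m)%:R.
Proof.
rewrite /corr -(subrK 1 (2 ^ m)%:R) addrC lerD2r.
have : \sum_(y | y != 0) chi m y * chi m (c * y ^ u) <= \sum_(y : F | y != 0) 1.
  by apply: ler_sum => y _; apply: chi_mul_le1.
by rewrite [X in _ <= X]sumr_neq sumr_const cardF.
Qed.

Lemma tr_corr_full c : corr c = (2 ^ m)%:R ->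
  forall y, y != 0 -> tr m y = tr m (c * y ^ u).
Proof.
move=> corr_c y y0; apply: (chi_inj_tr cardF).
have sum_gap : \sum_(z | z != 0) (1 - chi m z * chi m (c * z ^ u)) = 0.
  rewrite sumrB [X in X - _]sumr_neq sumr_const cardF.
  by rewrite -corr_c /corr; ring.
have gap_ge0 z : z != 0 -> 0 <= 1 - chi m z * chi m (c * z ^ u).
  by rewrite subr_ge0 chi_mul_le1.
have /eqP := psumr_eq0P gap_ge0 sum_gap y0; rewrite subr_eq0 => /eqP gap_y.
by rewrite -[LHS]mulr1 gap_y mulrA chi_mul_self mul1r.
Qed.

Section BentCorrelation.
Hypothesis walsh_b1 : forall a, `|walsh m m f a 1| = (2 ^ m)%:R.

Lemma dvd_sum_corr a : a != 0 -> ((2 ^ m)%:Z %| \sum_(i < half) corr (a * gam i))%Z.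
Proof.
move=> a0; have := walsh_b1 a; rewrite walsh_corr //.
set x := \sum_(i < half) _ => norm_x.
have [->|->] : x = 0 \/ x = (2 ^ m)%:R by move: norm_x; lia.
  exact: dvdz0.
by rewrite natz dvdzz.
Qed.

(* alpha * Delta_s and Delta_s differ only in their end points, so the two sums
   telescope. *)
Lemma dvd_corr_shift c : c != 0 -> ((2 ^ m)%:Z %| corr (c * alpha ^+ half) - corr c)%Z.
Proof.
move=> c0; have alpha0 := prim_root_neq0 m_gt1 alpha_prim.
pose a := c / alpha ^+ s.
have a0 : a != 0 by rewrite mulf_neq0 ?invr_eq0 ?expf_neq0.
have telescope : \sum_(i < half) corr (a * alpha * gam i) - \sum_(i < half) corr (a * gam i)
                 = corr (c * alpha ^+ half) - corr c.
  transitivity (\sum_(0 <= i < half) (corr (a * gam i.+1) - corr (a * gam i))).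
    rewrite sumrB !big_mkord; congr (_ - _).
    by apply: eq_bigr => i _; rewrite addnS exprS mulrA.
  by rewrite telescope_sumr // /a addn0 exprD mulrA divfK ?expf_neq0.
by rewrite -telescope rpredB ?dvd_sum_corr // mulf_neq0.
Qed.

Lemma dvd_corr_sub c : c != 0 -> ((2 ^ m)%:Z %| corr c - corr 1%R)%Z.
Proof.
move=> c0; have alpha0 := prim_root_neq0 m_gt1 alpha_prim.
have [[k k_lt] ->] := prim_rootP alpha_prim (expr_card_pred cardF c0); rewrite /= {k_lt}.
(* alpha ^+ (2 * half) = alpha, so the powers of alpha ^+ half exhaust the group *)
have -> : alpha ^+ k = alpha ^+ (2 * k * half).
  rewrite mulnAC double_half -(prednK (expn_gt0 2 m)) mulSn exprD exprM.
  by rewrite (prim_expr_order alpha_prim) expr1n mulr1.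
elim: (2 * k)%N => [|j IH]; first by rewrite mul0n expr0 subrr dvdz0.
rewrite mulSn exprD mulrC -(subrK (corr (alpha ^+ (j * half))) (corr _)) -addrA.
by rewrite rpredD ?dvd_corr_shift ?expf_neq0.
Qed.

Lemma dvd_corr1 : ((2 ^ m)%:Z %| corr 1%R)%Z.
Proof.
have : ((2 ^ m)%:Z %| \sum_(c : F | c != 0%R) (corr c - corr 1%R))%Z.
  by apply: rpred_sum => c; apply: dvd_corr_sub.
rewrite sumrB sum_corr sumr_neq sumr_const cardF.
have -> : (2 ^ m)%:R - (corr 1 *+ 2 ^ m - corr 1) = (2 ^ m)%:Z * (1 - corr 1) + corr 1.
  by rewrite -mulr_natl natz; ring.
by rewrite rpredDl // dvdz_mulr.
Qed.

Lemma exists_corr_full : exists2 c, c != 0 & corr c = (2 ^ m)%:R.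
Proof.
have [c /andP[c0 corr_pos]|corr_le0] := pickP (fun c => (c != 0) && (0 < corr c)).
  exists c => //.
  have /dvdzP[q corr_q] : ((2 ^ m)%:Z %| corr c)%Z.
    by rewrite -(subrK (corr 1) (corr c)) rpredD ?dvd_corr_sub ?dvd_corr1.
  have M_gt0 : 0 < (2 ^ m)%:Z by rewrite ltz_nat expn_gt0.
  have := corr_le c; move: corr_pos; rewrite corr_q natz pmulr_lgt0 // => q_gt0.
  rewrite -[X in _ <= X]mul1r ler_pM2r // => q_le1.
  have -> : q = 1 by lia.
  by rewrite mul1r.
have : \sum_(c | c != 0) corr c <= 0.
  by apply: sumr_le0 => c c0; move: (corr_le0 c); rewrite c0 /= => /negbT; rewrite -leNgt.
by rewrite sum_corr leNgt ltr0n expn_gt0.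
Qed.

End BentCorrelation.

End DegreeOne.

Section PowerSums.
Variables (F : finFieldType) (m : nat) (alpha : F).
Hypothesis cardF : #|F| = (2 ^ m)%N.
Hypothesis m_gt1 : (1 < m)%N.
Hypothesis alpha_prim : ((2 ^ m).-1).-primitive_root alpha.

Local Notation N := (2 ^ m).-1.

Lemma sum_nonzero_expr j :
  \sum_(y : F | y != 0) y ^+ j = if (N %| j)%N then -1 else 0.
Proof.
case: ifPn => [/dvdnP[q ->]|N_ndvd].
  under eq_bigr => y y0 do rewrite mulnC exprM expr_card_pred // expr1n.
  have two_pow_m : (2 ^ m)%:R = 0 :> F.
    by rewrite natrX (pcharf0 (card_pchar2 cardF)) expr0n gtn_eqF // ltnW.
  by rewrite sumr_neq sumr_const cardF two_pow_m sub0r.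
have alpha0 := prim_root_neq0 m_gt1 alpha_prim.
have alpha_j : alpha ^+ j != 1.
  by rewrite -(expr0 alpha) (eq_prim_root_expr alpha_prim) mod0n.
(* the sum is invariant under y |-> alpha * y, which scales it by alpha ^+ j *)
have : \sum_(y : F | y != 0) y ^+ j = alpha ^+ j * \sum_(y : F | y != 0) y ^+ j.
  rewrite [LHS](reindex_inj (mulfI alpha0)) /= mulr_sumr.
  apply: eq_big => [y|y _]; first by rewrite mulf_eq0 (negbTE alpha0).
  by rewrite exprMn.
move/eqP; rewrite -subr_eq0 -{1}(mul1r (\sum_(y | y != 0) _)) -mulrBl mulf_eq0.
by rewrite subr_eq0 eq_sym (negbTE alpha_j) => /eqP.
Qed.

Lemma sum_expr_tr (c : F) v j :
  \sum_(y | y != 0) y ^+ j * tr m (c * y ^+ v)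
    = \sum_(i < m) c ^+ (2 ^ i) * \sum_(y : F | y != 0) y ^+ (v * 2 ^ i + j).
Proof.
under eq_bigr do rewrite /tr mulr_sumr.
rewrite exchange_big /=; apply: eq_bigr => i _; rewrite mulr_sumr.
by apply: eq_bigr => y _; rewrite exprMn -exprM exprD mulrCA (mulrC (y ^+ j)).
Qed.

Lemma not_dvd_frobenius_twist v i : coprime v N -> (v < N)%N -> (0 < i < m)%N ->
  ~~ (N %| v * 2 ^ i + (N - v))%N.
Proof.
move=> v_coprime v_lt /andP[i_gt0 i_lt_m].
have pow_i_gt1 : (1 < 2 ^ i)%N by rewrite -{1}(expn0 2) ltn_exp2l.
have pow_i_lt : (2 ^ i < 2 ^ m)%N by rewrite ltn_exp2l.
have -> : (v * 2 ^ i + (N - v) = v * (2 ^ i - 1) + N)%N.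
  rewrite mulnBr muln1.
  by move: (v * 2 ^ i)%N (leq_pmulr v (ltnW pow_i_gt1)) v_lt => x; lia.
rewrite dvdn_addl // Gauss_dvdr 1?coprime_sym //; apply/negP => /dvdn_leq.
by move: pow_i_gt1 pow_i_lt; lia.
Qed.

(* Multiplying the identity by y ^+ (N - v) and summing over the nonzero y
   isolates, on the right, the coefficient -c of y ^+ N. *)
Lemma tr_identity_exponent (c : F) v : c != 0 -> coprime v N -> (v < N)%N ->
  (forall y, y != 0 -> tr m y = tr m (c * y ^+ v)) ->
  exists i : 'I_m, v = (2 ^ i %% N)%N.
Proof.
move=> c0 v_coprime v_lt tr_id.
have [/existsP[i /eqP]|] := boolP [exists i : 'I_m, (v == 2 ^ i %% N)%N]; first by exists i.
rewrite negb_exists => /forallP v_not_frob; exfalso.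
have lhs0 : \sum_(y : F | y != 0) y ^+ (N - v) * tr m (1 * y ^+ 1) = 0.
  rewrite sum_expr_tr big1 // => i _; rewrite sum_nonzero_expr ifN ?mulr0 //.
  apply: contra (v_not_frob i) => /dvdnP[q]; rewrite mul1n => dvd_q; apply/eqP.
  have : (2 ^ i + N = q * N + v)%N by rewrite -dvd_q -addnA (subnK (ltnW v_lt)).
  by move/(congr1 (modn^~ N)); rewrite modnDr modnMDl (modn_small v_lt) => ->.
have rhs : \sum_(y : F | y != 0) y ^+ (N - v) * tr m (c * y ^+ v) = - c.
  rewrite sum_expr_tr (bigD1 (Ordinal (ltnW m_gt1))) //= [X in _ + X]big1 ?addr0 => [|i i0].
    by rewrite expn0 expr1 muln1 (subnKC (ltnW v_lt)) sum_nonzero_expr dvdnn mulrN1.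
  rewrite sum_nonzero_expr ifN ?mulr0 // not_dvd_frobenius_twist //.
  by rewrite lt0n ltn_ord andbT; apply: contra i0 => /eqP i0; apply/eqP/val_inj.
move: lhs0; under eq_bigr => y y0 do rewrite mul1r expr1 tr_id //.
by rewrite rhs => /eqP; rewrite oppr_eq0 (negbTE c0).
Qed.

Lemma tr_identity_frobenius (u : int) (c : F) : gcdz u N%:Z = 1 -> c != 0 ->
  (forall y, y != 0 -> tr m y = tr m (c * y ^ u)) ->
  exists t : nat, (u = (2 ^ t)%:Z %[mod N%:Z])%Z.
Proof.
move=> u_coprime c0 tr_id.
have N_gt0 : (0 < N)%N by rewrite -subn1 subn_gt0 -{1}(expn0 2) ltn_exp2l // ltnW.
pose v := `|(u %% N%:Z)%Z|%N.
have u_mod : (u %% N%:Z)%Z = v%:Z by rewrite /v gez0_abs // modz_ge0 // lt0n_neq0.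
have v_lt : (v < N)%N by rewrite -ltz_nat -u_mod ltz_pmod.
have v_coprime : coprime v N.
  by move: u_coprime; rewrite -gcdz_modl u_mod /gcdz /= => -[gcd_v]; rewrite /coprime gcd_v.
have tr_id_v y : y != 0 -> tr m y = tr m (c * y ^+ v).
  move=> y0; rewrite tr_id // (exprz_congr_order cardF y0 (w' := v)) //.
  by rewrite -u_mod modz_mod.
have [i v_frob] := tr_identity_exponent c0 v_coprime v_lt tr_id_v.
by exists i; rewrite u_mod v_frob modz_nat.
Qed.

End PowerSums.

Lemma bent_frobenius_exponent (F : finFieldType) m (u : int) (alpha : F) s :
  #|F| = (2 ^ m)%N -> (1 < m)%N -> ((2 ^ m).-1).-primitive_root alpha ->
  gcdz u ((2 ^ m).-1)%:Z = 1 -> bent m m (fsupp m u (Delta alpha s m)) ->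
  exists t : nat, (u = (2 ^ t)%:Z %[mod ((2 ^ m).-1)%:Z])%Z.
Proof.
move=> cardF m_gt1 alpha_prim u_coprime f_bent.
have walsh_b1 a : `|walsh m m (fsupp m u (Delta alpha s m)) a 1| = (2 ^ m)%:R.
  by rewrite f_bent ?addnn ?doubleK ?natrX // /inSub expr1n.
have [c c0 /(tr_corr_full cardF) tr_id] := exists_corr_full cardF m_gt1 alpha_prim walsh_b1.
exact: (tr_identity_frobenius cardF m_gt1 alpha_prim u_coprime c0 tr_id).
Qed.

Theorem corollary1 (L : finFieldType) (r m : nat) (u : int) (alpha : L) (s : nat) :
  odd r -> (3 <= m)%N -> #|L| = (2 ^ (r * m))%N ->
  gcdz u ((2 ^ m).-1)%:Z = 1 ->
  (#|L|.-1).-primitive_root alpha ->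
  (s <= 2 ^ (r * m) - 2)%N ->
  bent (r * m) m (fsupp m u (Delta alpha s (r * m)))
  <-> (r = 1%N /\ exists t : nat, (u = (2 ^ t)%:Z %[mod ((2 ^ m).-1)%:Z])%Z).
Proof.
(* No bound on s is needed: Delta_s only depends on s modulo 2 ^ (r * m) - 1. *)
move=> r_odd m_ge3 cardL u_coprime alpha_prim _.
have m_gt1 : (1 < m)%N by apply: leq_trans m_ge3.
have r_gt0 : (0 < r)%N by case: (r) r_odd.
have m_le_rm : (m <= r * m)%N by rewrite leq_pmull.
rewrite cardL in alpha_prim.
split=> [f_bent | [r1 [t u_frob]]].
  have rm_eq_m := bent_Delta_dim cardL (leq_trans m_gt1 m_le_rm) alpha_prim m_le_rm f_bent.
  have r1 : r = 1%N by apply/eqP; rewrite -(eqn_pmul2r (ltnW m_gt1)) mul1n rm_eq_m.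
  subst r; rewrite mul1n in cardL alpha_prim f_bent.
  by split; last exact: bent_frobenius_exponent cardL m_gt1 alpha_prim u_coprime f_bent.
subst r; rewrite mul1n in cardL alpha_prim *.
move=> a b _; rewrite (walsh_frobenius_exponent s cardL m_gt1 alpha_prim u_frob).
by rewrite addnn doubleK natrX.
Qed.
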